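(* Let $Q\in\mathbb{R}^{n\times n}$ be symmetric positive definite, $A\in\mathbb{R}^{m\times n}$, $b\in\mathbb{R}^m$, $c\in\mathbb{R}^n$, and suppose the problem $P(Q,A,b,c)$: $\min_{x\in\mathbb{R}^n}\frac12 x^\intercal Qx+c^\intercal x$ s.t. $Ax\preceq b$ is feasible, with optimal solution $x^\ast$. Let $\mu^\ast$ be an optimal solution of the dual problem $\max_{\mu\succeq 0} g(\mu)$, where $g(\mu)=-\frac12(A^\intercal\mu+c)^\intercal Q^{-1}(A^\intercal\mu+c)-\mu^\intercal b$, and let $t:=\operatorname{sign}(\mu^\ast+\nabla g(\mu^\ast))\in\{+1,-1,0\}^m$ (componentwise), where $\nabla g(\mu)=-AQ^{-1}(A^\intercal\mu+c)-b$. Suppose an adversary (the target node) knows $A$, $x^\ast$ and $t$. Then $b$ cannot be uniquely retrieved by the adversary — i.e., there exist $b'\in\mathbb{R}^m$ with $b'\neq b$, a symmetric positive definite $Q'\in\mathbb{R}^{n\times n}$, $c'\in\mathbb{R}^n$, and an optimal solution $\mu'$ of the dual of $P(Q',A,b',c')$ (dual function $g'$ defined as $g$ with $Q',b',c'$ in place of $Q,b,c$) such that $x^\ast$ is the optimal solution of $P(Q',A,b',c')$ and $\operatorname{sign}(\mu'+\nabla g'(\mu'))=t$ — if and only if $t_i<0$ for some $i\in\{1,\dots,m\}$.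
   Context: Vector inequalities $\preceq,\succeq$ are element-wise. The paper's notion of non-unique retrieval: a private input cannot be uniquely retrieved by an adversary if there are at least two values of it, each consistent (together with some values of the other data unknown to the adversary) with everything the adversary knows; the claim makes this explicit for the knowledge $(A,x^\ast,t)$. *)

From HB Require Import structures.
From mathcomp Require Import all_boot all_order all_algebra.
From mathcomp Require Import reals.
Set Implicit Arguments. Unset Strict Implicit. Unset Printing Implicit Defensive.
Import Order.TTheory GRing.Theory Num.Theory.
Local Open Scope ring_scope.

Section QP.
Variable R : realType.

Definition symmetric_mx n (Q : 'M[R]_n) : Prop := Q^T = Q.

Definition posdef_mx n (Q : 'M[R]_n) : Prop :=
  forall x : 'cV[R]_n, x != 0 -> 0 < (x^T *m Q *m x) 0 0.

Definition qp_obj n (Q : 'M[R]_n) (c x : 'cV[R]_n) : R :=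
  2^-1 * (x^T *m Q *m x) 0 0 + (c^T *m x) 0 0.

Definition qp_feasible m n (A : 'M[R]_(m, n)) (b : 'cV[R]_m) (x : 'cV[R]_n) : Prop :=
  forall i, (A *m x) i 0 <= b i 0.

Definition qp_optimal m n (Q : 'M[R]_n) (A : 'M[R]_(m, n)) (b : 'cV[R]_m)
    (c : 'cV[R]_n) (x : 'cV[R]_n) : Prop :=
  qp_feasible A b x /\
  forall y, qp_feasible A b y -> qp_obj Q c x <= qp_obj Q c y.

Definition dual_g m n (Q : 'M[R]_n) (A : 'M[R]_(m, n)) (b : 'cV[R]_m)
    (c : 'cV[R]_n) (mu : 'cV[R]_m) : R :=
  - (2^-1 * ((A^T *m mu + c)^T *m invmx Q *m (A^T *m mu + c)) 0 0)
  - (mu^T *m b) 0 0.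

Definition grad_g m n (Q : 'M[R]_n) (A : 'M[R]_(m, n)) (b : 'cV[R]_m)
    (c : 'cV[R]_n) (mu : 'cV[R]_m) : 'cV[R]_m :=
  - (A *m invmx Q *m (A^T *m mu + c)) - b.

Definition nonneg_vec m (mu : 'cV[R]_m) : Prop := forall i, 0 <= mu i 0.

Definition dual_optimal m n (Q : 'M[R]_n) (A : 'M[R]_(m, n)) (b : 'cV[R]_m)
    (c : 'cV[R]_n) (mu : 'cV[R]_m) : Prop :=
  nonneg_vec mu /\
  forall nu, nonneg_vec nu -> dual_g Q A b c nu <= dual_g Q A b c mu.

Definition sign_vec m (v : 'cV[R]_m) : 'cV[R]_m := map_mx (@Num.sg R) v.

End QP.

From HB Require Import structures.
From mathcomp Require Import all_boot all_order all_algebra.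
From mathcomp Require Import reals.
From mathcomp Require Import ring lra.
Import Order.TTheory GRing.Theory Num.Theory.
Local Open Scope ring_scope.
Set Implicit Arguments. Unset Strict Implicit. Unset Printing Implicit Defensive.

(* For a dual optimum mu, dual optimality gives the KKT conditions mu >= 0,
   grad g(mu) <= 0 and mu_i * grad_i g(mu) = 0; the primal optimum is then the
   Lagrangian minimiser x = -Q^-1 (A^T mu + c), and grad g(mu) = A x - b.  A
   sign t_i >= 0 forces grad_i g(mu) = 0, i.e. b_i = (A x)_i: if t >= 0, every
   b' consistent with (A, x, t) equals A x.  If t_i < 0 then mu_i = 0 and
   constraint i is slack, so raising b_i by one leaves (x, mu) a KKT pair with
   the same sign pattern. *)

Section DotProduct.
Variable R : comPzRingType.

Definition dot k (u v : 'cV[R]_k) : R := (u^T *m v) 0 0.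

Lemma dotE k (u v : 'cV[R]_k) : dot u v = \sum_j u j 0 * v j 0.
Proof. by rewrite /dot mxE; apply: eq_bigr => j _; rewrite mxE. Qed.

Lemma dotC k (u v : 'cV[R]_k) : dot u v = dot v u.
Proof. by rewrite !dotE; apply: eq_bigr => j _; rewrite mulrC. Qed.

Lemma dotDl k (u w v : 'cV[R]_k) : dot (u + w) v = dot u v + dot w v.
Proof. by rewrite /dot linearD /= mulmxDl mxE. Qed.

Lemma dotDr k (u w v : 'cV[R]_k) : dot v (u + w) = dot v u + dot v w.
Proof. by rewrite /dot mulmxDr mxE. Qed.

Lemma dotZl k a (u v : 'cV[R]_k) : dot (a *: u) v = a * dot u v.
Proof. by rewrite /dot linearZ /= -scalemxAl mxE. Qed.

Lemma dotZr k a (u v : 'cV[R]_k) : dot v (a *: u) = a * dot v u.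
Proof. by rewrite /dot -scalemxAr mxE. Qed.

Lemma dotNl k (u v : 'cV[R]_k) : dot (- u) v = - dot u v.
Proof. by rewrite /dot linearN /= mulNmx mxE. Qed.

Lemma dotNr k (u v : 'cV[R]_k) : dot v (- u) = - dot v u.
Proof. by rewrite /dot mulmxN mxE. Qed.

Lemma dotBl k (u w v : 'cV[R]_k) : dot (u - w) v = dot u v - dot w v.
Proof. by rewrite dotDl dotNl. Qed.

Lemma dotBr k (u w v : 'cV[R]_k) : dot v (u - w) = dot v u - dot v w.
Proof. by rewrite dotDr dotNr. Qed.

Lemma dot_mulmx k l (u : 'cV[R]_k) (M : 'M[R]_(k, l)) (w : 'cV[R]_l) :
  dot u (M *m w) = dot (M^T *m u) w.
Proof. by rewrite /dot trmx_mul trmxK mulmxA. Qed.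

Lemma dot_deltal k (i : 'I_k) (v : 'cV[R]_k) : dot (delta_mx i 0) v = v i 0.
Proof. by rewrite /dot trmx_delta -rowE mxE. Qed.

End DotProduct.

Lemma le0_small_mul (R : realFieldType) (a K x : R) :
  0 < a -> (forall s, 0 < s -> s <= a -> x <= s * K) -> x <= 0.
Proof.
move=> a_gt0 small; rewrite leNgt; apply/negP => x_gt0.
have K1_gt0 : 0 < `|K| + 1 by rewrite ltr_wpDl.
set s := Num.min a (x / (`|K| + 1)).
have s_gt0 : 0 < s by rewrite lt_min a_gt0 divr_gt0.
have xs : x <= s * K by apply: small; rewrite ?ge_min ?lexx.
have sK : s * K <= s * `|K| by apply: ler_wpM2l; [exact: ltW | exact: ler_norm].
have : s * (`|K| + 1) <= x by rewrite -ler_pdivlMr // ge_min lexx orbT.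
by rewrite mulrDr mulr1; lra.
Qed.

Section QuadraticForm.
Variable R : realType.

Lemma posdef_gt0 n (Q : 'M[R]_n) (x : 'cV[R]_n) :
  posdef_mx Q -> x != 0 -> 0 < dot x (Q *m x).
Proof. by move=> posQ /posQ; rewrite /dot mulmxA. Qed.

Lemma posdef_ge0 n (Q : 'M[R]_n) (x : 'cV[R]_n) :
  posdef_mx Q -> 0 <= dot x (Q *m x).
Proof.
move=> posQ; have [->|/(posdef_gt0 posQ)/ltW //] := eqVneq x 0.
by rewrite mulmx0 /dot mulmx0 mxE.
Qed.

Lemma posdef_mx_unit n (Q : 'M[R]_n) : posdef_mx Q -> Q \in unitmx.
Proof.
move=> posQ; rewrite -row_free_unit -kermx_eq0; apply/eqP/row_matrixP => i.
rewrite row0; set u := row i (kermx Q); apply/eqP; apply: contraT => u_neq0.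
have uQ : u *m Q = 0 by rewrite -row_mul mulmx_ker row0.
have uT_neq0 : u^T != 0 by rewrite -(inj_eq (@trmx_inj _ _ _)) trmxK trmx0.
by have := posQ _ uT_neq0; rewrite trmxK uQ mul0mx mxE ltxx.
Qed.

Lemma symmetric_invmx n (Q : 'M[R]_n) : symmetric_mx Q -> symmetric_mx (invmx Q).
Proof. by rewrite /symmetric_mx trmx_inv => ->. Qed.

Lemma dot_symmetric n (Q : 'M[R]_n) (x y : 'cV[R]_n) :
  symmetric_mx Q -> dot x (Q *m y) = dot y (Q *m x).
Proof. by move=> symQ; rewrite dot_mulmx symQ dotC. Qed.

Lemma qp_objE n (Q : 'M[R]_n) (c x : 'cV[R]_n) :
  qp_obj Q c x = 2^-1 * dot x (Q *m x) + dot c x.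
Proof. by rewrite /qp_obj /dot mulmxA. Qed.

Lemma qp_obj_midpoint n (Q : 'M[R]_n) (c x y : 'cV[R]_n) :
  symmetric_mx Q ->
  qp_obj Q c (2^-1 *: (x + y)) =
  2^-1 * (qp_obj Q c x + qp_obj Q c y) - 8^-1 * dot (x - y) (Q *m (x - y)).
Proof.
move=> symQ; rewrite !qp_objE -scalemxAr !mulmxDr !mulmxN.
rewrite !(dotZl, dotZr, dotDl, dotDr, dotNl, dotNr) (dot_symmetric y x symQ).
lra.
Qed.

End QuadraticForm.

Lemma add_delta_mx_neq (R : nzRingType) m n (b : 'M[R]_(m, n)) i j :
  b + delta_mx i j != b.
Proof.
apply/eqP => /matrixP/(_ i j)/eqP; rewrite mxE [X in _ + X]mxE !eqxx.
by rewrite -subr_eq0 addrAC subrr add0r oner_eq0.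
Qed.

Lemma sub_delta_mx_coord (R : pzRingType) m (v : 'cV[R]_m) i j :
  (v - delta_mx i 0) j 0 = v j 0 - (j == i)%:R.
Proof. by rewrite mxE [(- delta_mx _ _) _ _]mxE mxE eqxx andbT eq_sym. Qed.

Lemma sign_vec_sub_delta (R : realType) m (v : 'cV[R]_m) i :
  v i 0 < 0 -> sign_vec (v - delta_mx i 0) = sign_vec v.
Proof.
move=> v_i_lt0; apply/matrixP => j k; rewrite (ord1 k) mxE [RHS]mxE.
rewrite sub_delta_mx_coord; have [->|_] := eqVneq j i; last by rewrite subr0.
by rewrite (ltr0_sg v_i_lt0) ltr0_sg // subr_lt0; apply: lt_trans v_i_lt0 _.
Qed.

Section Duality.
Variables (R : realType) (m n : nat).
Variables (Q : 'M[R]_n) (A : 'M[R]_(m, n)) (c : 'cV[R]_n).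
Hypotheses (symQ : symmetric_mx Q) (posQ : posdef_mx Q).

Definition lagrangian (b : 'cV[R]_m) (x : 'cV[R]_n) (mu : 'cV[R]_m) : R :=
  qp_obj Q c x + dot mu (A *m x - b).

Definition lagrangian_argmin (mu : 'cV[R]_m) : 'cV[R]_n :=
  - (invmx Q *m (A^T *m mu + c)).

Lemma mulmx_lagrangian_argmin mu : Q *m lagrangian_argmin mu = - (A^T *m mu + c).
Proof. by rewrite mulmxN mulmxA mulmxV ?posdef_mx_unit // mul1mx. Qed.

Lemma grad_gE b mu : grad_g Q A b c mu = A *m lagrangian_argmin mu - b.
Proof. by rewrite /grad_g mulmxN mulmxA. Qed.

Lemma grad_g_coord b mu j :
  grad_g Q A b c mu j 0 = (A *m lagrangian_argmin mu) j 0 - b j 0.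
Proof. by rewrite grad_gE mxE [(- b) _ _]mxE. Qed.

Lemma grad_g_addr b d mu : grad_g Q A (b + d) c mu = grad_g Q A b c mu - d.
Proof. by rewrite /grad_g opprD addrA. Qed.

Lemma dual_gE b mu :
  dual_g Q A b c mu =
  - (2^-1 * dot (A^T *m mu + c) (invmx Q *m (A^T *m mu + c))) - dot mu b.
Proof. by rewrite /dual_g /dot mulmxA. Qed.

Lemma dual_g_addr b d nu : dual_g Q A (b + d) c nu = dual_g Q A b c nu - dot nu d.
Proof. by rewrite !dual_gE dotDr opprD addrA. Qed.

Lemma dual_g_line b mu d s :
  dual_g Q A b c (mu + s *: d) =
  dual_g Q A b c mu + s * dot d (grad_g Q A b c mu)
  - 2^-1 * s ^+ 2 * dot (A^T *m d) (invmx Q *m (A^T *m d)).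
Proof.
rewrite !dual_gE grad_gE /lagrangian_argmin dotBr [dot d _]dot_mulmx dotNr.
set P := invmx Q; set v := A^T *m mu + c; set w := A^T *m d.
have -> : A^T *m (mu + s *: d) + c = v + s *: w.
  by rewrite mulmxDr -scalemxAr addrAC.
have symPvw : dot v (P *m w) = dot w (P *m v).
  exact/dot_symmetric/symmetric_invmx.
clearbody v w; rewrite mulmxDr -scalemxAr !(dotDl, dotDr, dotZl, dotZr) symPvw.
lra.
Qed.

Lemma lagrangian_argminP b mu y :
  lagrangian b (lagrangian_argmin mu) mu <= lagrangian b y mu.
Proof.
set x := lagrangian_argmin mu.
have linear_part z : dot c z + dot mu (A *m z) = - dot z (Q *m x).
  rewrite [dot mu _]dot_mulmx mulmx_lagrangian_argmin dotNr opprK dotDr.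
  by rewrite addrC !(dotC z).
have := posdef_ge0 (y - x) posQ.
rewrite mulmxBr !(dotBl, dotBr) (dot_symmetric x y symQ).
rewrite /lagrangian !qp_objE !dotBr.
have := linear_part x; have := linear_part y.
lra.
Qed.

Lemma kkt_qp_optimal b mu :
  nonneg_vec mu -> qp_feasible A b (lagrangian_argmin mu) ->
  (forall j, mu j 0 * (A *m lagrangian_argmin mu - b) j 0 = 0) ->
  qp_optimal Q A b c (lagrangian_argmin mu).
Proof.
move=> mu_ge0 feas slack; split=> // y feas_y.
have slack0 : dot mu (A *m lagrangian_argmin mu - b) = 0.
  by rewrite dotE big1.
have slack_y : dot mu (A *m y - b) <= 0.
  rewrite dotE -oppr_ge0 -sumrN; apply: sumr_ge0 => j _.
  by move: (feas_y j) (mu_ge0 j); rewrite !mxE; nra.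
by have := lagrangian_argminP b mu y; rewrite /lagrangian slack0; lra.
Qed.

Lemma qp_feasible_midpoint b x y :
  qp_feasible A b x -> qp_feasible A b y -> qp_feasible A b (2^-1 *: (x + y)).
Proof.
move=> feas_x feas_y i; move: (feas_x i) (feas_y i).
by rewrite -scalemxAr mulmxDr !mxE; lra.
Qed.

Lemma qp_optimal_uniq b x1 x2 :
  qp_optimal Q A b c x1 -> qp_optimal Q A b c x2 -> x1 = x2.
Proof.
move=> [feas1 opt1] [feas2 opt2]; apply/eqP; apply: contraT => x12_neq.
have x12_sub_neq0 : x1 - x2 != 0 by rewrite subr_eq0.
have := posdef_gt0 posQ x12_sub_neq0.
have := opt1 _ (qp_feasible_midpoint feas1 feas2).
rewrite qp_obj_midpoint //.
by have := opt1 _ feas2; have := opt2 _ feas1; lra.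
Qed.

Lemma dual_optimal_line b mu i s :
  dual_optimal Q A b c mu -> - mu i 0 <= s ->
  s * grad_g Q A b c mu i 0
  - 2^-1 * s ^+ 2 * dot (A^T *m delta_mx i 0) (invmx Q *m (A^T *m delta_mx i 0))
  <= 0.
Proof.
move=> [mu_ge0 opt] s_ge.
have step_ge0 : nonneg_vec (mu + s *: delta_mx i 0).
  move=> j; rewrite !mxE; have [->|_] := eqVneq j i; last by rewrite mulr0 addr0.
  by rewrite !eqxx /=; lra.
by have := opt _ step_ge0; rewrite dual_g_line dot_deltal; lra.
Qed.

Lemma dual_optimal_kkt b mu i :
  dual_optimal Q A b c mu ->
  grad_g Q A b c mu i 0 <= 0 /\ mu i 0 * grad_g Q A b c mu i 0 = 0.
Proof.
move=> dual_opt; have mu_ge0 := dual_opt.1 i.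
have line := dual_optimal_line (i := i) dual_opt.
set gr := grad_g _ _ _ _ _ i 0 in line *; set k := dot _ _ in line.
have gr_le0 : gr <= 0.
  apply: (@le0_small_mul _ 1 (2^-1 * k)) => // s s_gt0 _.
  by have := line s; nra.
split=> //; have [->|mu_neq0] := eqVneq (mu i 0) 0; first by rewrite mul0r.
have mu_gt0 : 0 < mu i 0 by rewrite lt_def mu_neq0.
have opp_gr_le0 : - gr <= 0.
  apply: (@le0_small_mul _ (mu i 0) (2^-1 * k)) => // s s_gt0 s_le.
  by have := line (- s); nra.
have -> : gr = 0 by lra.
by rewrite mulr0.
Qed.

Lemma dual_optimal_primal b xs mu :
  qp_optimal Q A b c xs -> dual_optimal Q A b c mu -> xs = lagrangian_argmin mu.
Proof.
move=> primal_opt dual_opt; apply: qp_optimal_uniq primal_opt _.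
apply: kkt_qp_optimal; first exact: dual_opt.1.
- move=> j; have [+ _] := dual_optimal_kkt j dual_opt.
  by rewrite grad_g_coord subr_le0.
- by move=> j; have [_] := dual_optimal_kkt j dual_opt; rewrite grad_gE.
Qed.

Lemma active_constraint b xs mu j :
  qp_optimal Q A b c xs -> dual_optimal Q A b c mu ->
  0 <= sign_vec (mu + grad_g Q A b c mu) j 0 -> (A *m xs) j 0 = b j 0.
Proof.
move=> primal_opt dual_opt; rewrite mxE sgr_ge0 mxE => sum_ge0.
have [gr_le0 slack] := dual_optimal_kkt j dual_opt.
have mu_ge0 := dual_opt.1 j.
have : grad_g Q A b c mu j 0 = 0 by nra.
by rewrite grad_g_coord -(dual_optimal_primal primal_opt dual_opt) => /subr0_eq.
Qed.

Lemma sign_vec_ge0_rhs b xs mu :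
  qp_optimal Q A b c xs -> dual_optimal Q A b c mu ->
  (forall j, 0 <= sign_vec (mu + grad_g Q A b c mu) j 0) -> b = A *m xs.
Proof.
move=> primal_opt dual_opt sign_ge0; apply/matrixP => j k.
by rewrite (ord1 k) (active_constraint primal_opt dual_opt (sign_ge0 j)).
Qed.

Lemma relax_inactive_constraint b xs mu i :
  qp_optimal Q A b c xs -> dual_optimal Q A b c mu ->
  sign_vec (mu + grad_g Q A b c mu) i 0 < 0 ->
  [/\ dual_optimal Q A (b + delta_mx i 0) c mu,
      qp_optimal Q A (b + delta_mx i 0) c xs &
      sign_vec (mu + grad_g Q A (b + delta_mx i 0) c mu) =
      sign_vec (mu + grad_g Q A b c mu)].
Proof.
move=> primal_opt dual_opt sign_lt0.
have [gr_le0 slack] := dual_optimal_kkt i dual_opt.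
have mu_ge0 := dual_opt.1 i.
have mu_i0 : mu i 0 = 0 by move: sign_lt0; rewrite mxE sgr_lt0 mxE; nra.
have xsE := dual_optimal_primal primal_opt dual_opt.
split.
- split=> [|nu nu_ge0]; first exact: dual_opt.1.
  rewrite !dual_g_addr ![dot _ (delta_mx _ _)]dotC !dot_deltal mu_i0 subr0.
  by have := dual_opt.2 nu nu_ge0; have := nu_ge0 i; lra.
- rewrite xsE; apply: kkt_qp_optimal; first exact: dual_opt.1.
  + move=> j; rewrite -xsE; apply: le_trans (primal_opt.1 j) _.
    by rewrite [leRHS]mxE lerDl mxE ler0n.
  + move=> j; rewrite -grad_gE grad_g_addr.
    have [->|j_neq_i] := eqVneq j i; first by rewrite mu_i0 mul0r.
    have [_ slack_j] := dual_optimal_kkt j dual_opt.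
    by rewrite sub_delta_mx_coord (negPf j_neq_i) subr0.
- rewrite grad_g_addr addrA sign_vec_sub_delta //.
  by move: sign_lt0; rewrite mxE sgr_lt0.
Qed.

End Duality.

Theorem proposition5 (R : realType) (m n : nat)
  (Q : 'M[R]_n) (A : 'M[R]_(m, n)) (b : 'cV[R]_m) (c : 'cV[R]_n)
  (xs : 'cV[R]_n) (mus : 'cV[R]_m) :
  symmetric_mx Q -> posdef_mx Q ->
  qp_optimal Q A b c xs ->
  dual_optimal Q A b c mus ->
  let t := sign_vec (mus + grad_g Q A b c mus) in
  (exists (b' : 'cV[R]_m) (Q' : 'M[R]_n) (c' : 'cV[R]_n) (mu' : 'cV[R]_m),
      b' != b /\ symmetric_mx Q' /\ posdef_mx Q' /\
      dual_optimal Q' A b' c' mu' /\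
      qp_optimal Q' A b' c' xs /\
      sign_vec (mu' + grad_g Q' A b' c' mu') = t)
  <-> (exists i : 'I_m, t i 0 < 0).
Proof.
move=> symQ posQ primal_opt dual_opt t; split.
- case=> b' [Q' [c' [mu' [b'_neq_b
    [symQ' [posQ' [dual_opt' [primal_opt' sign_eq]]]]]]]].
  have [/existsP //|/existsPn t_not_lt0] := boolP [exists i, t i 0 < 0].
  have t_ge0 j : 0 <= t j 0 by rewrite leNgt t_not_lt0.
  have bE := sign_vec_ge0_rhs symQ posQ primal_opt dual_opt t_ge0.
  rewrite -sign_eq in t_ge0.
  have b'E := sign_vec_ge0_rhs symQ' posQ' primal_opt' dual_opt' t_ge0.
  by rewrite b'E -bE eqxx in b'_neq_b.
- case=> i t_i_lt0; exists (b + delta_mx i 0), Q, c, mus.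
  have [dual_opt' primal_opt' sign_eq] :=
    relax_inactive_constraint symQ posQ primal_opt dual_opt t_i_lt0.
  by do !split=> //; apply: add_delta_mx_neq.
Qed.
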